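(* Let $T>0$. If $\int_{\mathbb{Q}_p^N}\|\xi\|_p^{d\beta}d\mu(\xi)<+\infty$, then \[ \lim_{h\to0^+}\int_0^T\int_{\mathbb{Q}_p^N}\sup_{|r-t|<h}\left|\mathcal{F}\Gamma(r)(\xi)-\mathcal{F}\Gamma(t)(\xi)\right|^2d\mu(\xi)\,dt=0 . \] Furthermore, the same condition implies $\int_0^Tdt\int_{\mathbb{Q}_p^N}|\mathcal{F}\Gamma(t)(\xi)|^2d\mu(\xi)<+\infty$.
   Context: $p$ prime; $\mathbb{Q}_p^N$ with $\|x\|_p=\max_i|x_i|_p$, normalized Haar measure, Fourier transform $(\mathcal{F}\varphi)(\xi)=\int\chi_p(-\xi\cdot x)\varphi(x)d^Nx$, $\chi_p(y)=\exp(2\pi i\{y\}_p)$. $a(\xi)$ is an elliptic polynomial of degree $d$ (homogeneous of degree $d$, $a(\xi)=0\iff\xi=0$), $\beta>0$, and $\Gamma(t,x)=\mathcal{F}^{-1}_{\xi\to x}(e^{-t|a(\xi)|_p^\beta})$ for $t>0$, $\Gamma(0)=\delta$, so $\mathcal{F}\Gamma(t)(\xi)=e^{-t|a(\xi)|_p^\beta}$. $\mu$ is a regular Borel measure on $\mathbb{Q}_p^N$ (the spectral measure of the noise: $\mathcal{F}\mu=f$ with $f$ nonnegative continuous on $\mathbb{Q}_p^N\setminus\{0\}$ defining a positive-definite distribution). *)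

From HB Require Import structures.
From mathcomp Require Import all_boot all_order all_algebra.
From mathcomp Require Import all_classical all_reals all_analysis.
From mathcomp Require mpoly.
Set Implicit Arguments. Unset Strict Implicit. Unset Printing Implicit Defensive.
Import Order.TTheory GRing.Theory Num.Theory.
Local Open Scope ring_scope.
Local Open Scope classical_set_scope.

Record is_Qp (R : realType) (p : nat) (K : fieldType) (absp : K -> R) : Prop := {
  Qp_prime : prime p;
  Qp_char0 : [pchar K] =i pred0;
  Qp_ge0 : forall x, 0 <= absp x;
  Qp_eq0 : forall x, absp x = 0 <-> x = 0;
  Qp_mul : forall x y, absp (x * y) = absp x * absp y;
  Qp_ultra : forall x y, absp (x + y) <= Num.max (absp x) (absp y);
  Qp_absp : absp p%:R = (p%:R)^-1;
  Qp_complete : forall u : nat -> K,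
     (forall e : R, 0 < e -> exists n0, forall m n, (n0 <= m)%N -> (n0 <= n)%N ->
        absp (u m - u n) < e) ->
     exists l, forall e : R, 0 < e -> exists n0, forall n, (n0 <= n)%N -> absp (u n - l) < e;
  Qp_dense : forall (x : K) (e : R), 0 < e -> exists q : rat, absp (x - ratr q) < e }.

Definition normp (R : realType) (K : fieldType) (absp : K -> R) (N : nat) (x : 'rV[K]_N) : R :=
  \big[Num.max/0]_(i < N) absp (x ord0 i).

Definition vecQp (R : realType) (K : fieldType) (absp : K -> R) (N : nat) : Type :=
  'rV[K]_N.
HB.instance Definition _ (R : realType) (K : fieldType) (absp : K -> R) (N : nat) :=
  Choice.on (vecQp absp N).
HB.instance Definition _ (R : realType) (K : fieldType) (absp : K -> R) (N : nat) :=
  isPointed.Build (vecQp absp N) (0 : 'rV[K]_N).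

Definition openp (R : realType) (K : fieldType) (absp : K -> R) (N : nat) :
    set (set (vecQp absp N)) :=
  [set U | forall x, U x -> exists2 r : R, 0 < r &
     [set y | normp absp ((y : 'rV[K]_N) - x) < r] `<=` U].

Definition QpN (R : realType) (K : fieldType) (absp : K -> R) (N : nat) :=
  g_sigma_algebraType (@openp R K absp N).

Definition poly_eval (K : fieldType) (N : nat) (a : mpoly.mpoly N K) (x : 'rV[K]_N) : K :=
  mpoly.meval (fun i => x ord0 i) a.
Definition elliptic (K : fieldType) (N d : nat) (a : mpoly.mpoly N K) : Prop :=
  a \is @mpoly.ishomog1 N K d (mpoly.mpoly_mdeg__canonical__mpoly_Measure N) /\ forall x, poly_eval a x = 0 <-> x = 0.

(* Fourier transform of the heat kernel: (F Gamma(t))(xi) = exp(-t |a(xi)|_p^beta) *)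
Definition FGamma (R : realType) (K : fieldType) (absp : K -> R) (N : nat)
    (a : mpoly.mpoly N K) (beta t : R) (xi : 'rV[K]_N) : R :=
  expR (- (t * (absp (poly_eval a xi)) `^ beta)).

From HB Require Import structures.
From mathcomp Require Import all_boot all_order all_algebra.
From mathcomp Require Import all_classical all_reals all_analysis.
From mathcomp Require mpoly.
From mathcomp Require Import lra.
Import Order.TTheory GRing.Theory Num.Theory.
Local Open Scope ring_scope.
Local Open Scope classical_set_scope.

(** Since [t |-> exp (-t A)] is 1-Lipschitz on [t >= 0] for [A = |a(xi)|_p^beta]
   and bounded by 1, the squared oscillation over [|r - t| < h] is at most
   [h |a(xi)|_p^beta], and homogeneity bounds [|a(xi)|_p^beta] by a multiple
   of [||xi||_p^(d beta)].  Integrating gives a bound [O(h)] for the double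
   integral.  The moment condition together with local finiteness makes [mu]
   finite, which bounds the second integral by [T mu(Q_p^N)]. *)

Section PAdicAbsoluteValue.
Context {R : realType} {p : nat} {K : fieldType} {absp : K -> R}.
Hypothesis HQp : is_Qp p absp.

Lemma absp0 : absp 0 = 0.
Proof. exact/(Qp_eq0 HQp). Qed.

Lemma absp1 : absp 1 = 1.
Proof.
have absp1_neq0 : absp 1 != 0 by apply/eqP => /(Qp_eq0 HQp)/eqP; rewrite oner_eq0.
by apply: (mulfI absp1_neq0); rewrite -(Qp_mul HQp) !mulr1.
Qed.

Lemma abspD x y : absp (x + y) <= absp x + absp y.
Proof.
apply: le_trans (Qp_ultra HQp x y) _.
by rewrite ge_max lerDl lerDr !(Qp_ge0 HQp).
Qed.

Lemma absp_sum {I : Type} (s : seq I) (F : I -> K) :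
  absp (\sum_(i <- s) F i) <= \sum_(i <- s) absp (F i).
Proof.
elim: s => [|x s IH]; first by rewrite !big_nil absp0.
by rewrite !big_cons; apply: le_trans (abspD _ _) _; exact: lerD.
Qed.

Lemma absp_prod {I : Type} (s : seq I) (F : I -> K) :
  absp (\prod_(i <- s) F i) = \prod_(i <- s) absp (F i).
Proof.
elim: s => [|x s IH]; first by rewrite !big_nil absp1.
by rewrite !big_cons (Qp_mul HQp) IH.
Qed.

Lemma abspX x n : absp (x ^+ n) = absp x ^+ n.
Proof.
elim: n => [|n IH]; first by rewrite !expr0 absp1.
by rewrite !exprS (Qp_mul HQp) IH.
Qed.

Lemma normp_ge0 {N} (x : 'rV[K]_N) : 0 <= normp absp x.
Proof.
rewrite /normp; elim/big_ind: _ => // [u v u0 v0|i _]; first by rewrite le_max u0.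
exact: (Qp_ge0 HQp).
Qed.

Lemma absp_le_normp {N} (x : 'rV[K]_N) i : absp (x ord0 i) <= normp absp x.
Proof. exact: le_bigmax. Qed.

Lemma normp_ultra {N} (x y : 'rV[K]_N) :
  normp absp (x + y) <= Num.max (normp absp x) (normp absp y).
Proof.
apply: bigmax_le => [|i _]; first by rewrite le_max normp_ge0.
rewrite mxE; apply: le_trans (Qp_ultra HQp _ _) _.
by rewrite ge_max !le_max !absp_le_normp ?orbT.
Qed.

(* Balls are open for the ultrametric [normp], hence measurable. *)
Lemma measurable_normp_le N {r : R} : 0 < r ->
  measurable [set xi : QpN absp N | normp absp xi <= r].
Proof.
move=> r_gt0; apply: sub_sigma_algebra => x xr; exists r => // y /= yxr.
have := normp_ultra ((y : 'rV[K]_N) - x) x; rewrite subrK => /le_trans; apply.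
by rewrite ge_max (ltW yxr).
Qed.

Lemma homog_absp_le {N d} {a : mpoly.mpoly N K} :
  a \is @mpoly.ishomog1 N K d (mpoly.mpoly_mdeg__canonical__mpoly_Measure N) ->
  exists2 C : R, 0 <= C & forall x, absp (poly_eval a x) <= C * normp absp x ^+ d.
Proof.
rewrite qualifE /= => /all_filterP homa.
exists (\sum_(m <- mpoly.msupp a) absp (mpoly.mcoeff m a)) => [|x].
  by apply: sumr_ge0 => m _; exact: (Qp_ge0 HQp).
rewrite /poly_eval mpoly.mevalE mulr_suml; apply: le_trans (absp_sum _ _) _.
rewrite -homa !big_filter; apply: ler_sum => m /eqP <-.
rewrite (Qp_mul HQp) ler_wpM2l ?(Qp_ge0 HQp) // absp_prod mpoly.mdegE -prodrXr.
apply: ler_prod => i _; rewrite abspX exprn_ge0 ?(Qp_ge0 HQp) //=.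
by rewrite lerXn2r ?absp_le_normp ?nnegrE ?(Qp_ge0 HQp) ?normp_ge0.
Qed.

Lemma homog_absp_powR_le {N d} {a : mpoly.mpoly N K} (beta : R) :
  a \is @mpoly.ishomog1 N K d (mpoly.mpoly_mdeg__canonical__mpoly_Measure N) ->
  0 <= beta ->
  exists2 D : R, 0 < D &
    forall x, absp (poly_eval a x) `^ beta <= D * normp absp x `^ (d%:R * beta).
Proof.
move=> /homog_absp_le [C C_ge0 aC] beta_ge0.
exists (C `^ beta + 1); first by rewrite ltr_pwDr ?powR_ge0.
move=> x; have x_ge0 := normp_ge0 x.
apply: le_trans (_ : (C * normp absp x ^+ d) `^ beta <= _).
  by rewrite ge0_ler_powR ?nnegrE ?(Qp_ge0 HQp) ?mulr_ge0 ?exprn_ge0 ?aC.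
rewrite powRM ?exprn_ge0 // -powR_mulrn // -powRrM.
by rewrite ler_wpM2r ?powR_ge0 // lerDl.
Qed.

End PAdicAbsoluteValue.

Lemma ler_expRN_dist {R : realType} (x y : R) : 0 <= x -> 0 <= y ->
  `|expR (- x) - expR (- y)| <= `|x - y|.
Proof.
wlog xy : x y / x <= y.
  move=> wlog_xy x0 y0; have [/wlog_xy|/ltW yx] := leP x y; first exact.
  by rewrite distrC [`|x - y|]distrC; exact: wlog_xy.
move=> x0 y0.
rewrite ger0_norm ?subr_ge0 ?ler_expR ?lerN2 // ler0_norm ?subr_le0 //.
have -> : expR (- y) = expR (- x) * expR (x - y) by rewrite -expRD; congr expR; lra.
have ex1 : expR (- x) <= 1 by rewrite expR_le1 oppr_le0.
have exp_tangent := expR_ge1Dx (x - y).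
have : expR (- x) * (1 - expR (x - y)) <= 1 * (y - x).
  by apply: ler_pM; rewrite ?expR_ge0 ?subr_ge0 ?expR_le1 ?subr_le0 //; lra.
lra.
Qed.

Lemma cvge_at_right0_mulr (R : realType) (M : R) :
  ((fun h : R => (h * M)%:E) @ 0%R^'+ --> (0%R)%:E)%E.
Proof.
apply: cvg_at_right_filter; apply: cvg_EFin; first by near=> h.
by have := @cvgMr_tmp R R (nbhs 0) _ id 0 M cvg_id; rewrite mul0r; exact.
Unshelve. all: end_near.
Qed.

Lemma lebesgue_measure_itv_cc (R : realType) (a b : R) : a <= b ->
  lebesgue_measure `[a, b] = (b - a)%:E.
Proof.
rewrite lebesgue_measure_itv /= lte_fin le_eqVlt => /predU1P[->|->] //.
by rewrite ltxx subrr.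
Qed.

Local Open Scope ereal_scope.

(* The oscillation integrand need not be measurable.  Monotonicity and
   homogeneity of the integral of nonnegative functions survive, since such an
   integral is still the supremum over the simple functions below the integrand. *)
Section NonnegIntegral.
Context {d} {T : measurableType d} {R : realType}.
Variable mu : {measure set T -> \bar R}.
Import HBNNSimple.

Lemma ge0_le_integral_nonmeas {D : set T} {f g : T -> \bar R} :
  (forall x, D x -> 0 <= f x) -> (forall x, D x -> f x <= g x) ->
  \int[mu]_(x in D) f x <= \int[mu]_(x in D) g x.
Proof.
move=> f0 fg.
have g0 x : D x -> 0 <= g x by move=> Dx; exact: le_trans (f0 _ Dx) (fg _ Dx).
rewrite (ge0_integralE _ f0) (ge0_integralE _ g0).
apply: ereal_sup_le => _ [h hf <-]; exists h => // x.
apply: le_trans (hf x) _; rewrite /patch; case: ifP => // /[1!inE] Dx; exact: fg.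
Qed.

Lemma ge0_integralZl_le_nonmeas {D : set T} {f : T -> \bar R} (c : R) :
  (0 < c)%R -> (forall x, D x -> 0 <= f x) ->
  \int[mu]_(x in D) (c%:E * f x) <= c%:E * \int[mu]_(x in D) f x.
Proof.
move=> c_gt0 f0.
have cf0 x : D x -> 0 <= c%:E * f x.
  by move=> Dx; apply: mule_ge0; [rewrite lee_fin ltW | exact: f0].
rewrite (ge0_integralE _ f0) (ge0_integralE _ cf0).
apply: ge_ereal_sup => _ [h hf <-].
have cV_ge0 : (0 <= c^-1)%R by rewrite invr_ge0 ltW.
pose h' := scale_nnsfun h cV_ge0.
have -> : sintegral mu h = c%:E * sintegral mu h'.
  have -> : sintegral mu h' = sintegral mu (cst c^-1 \* h)%R by [].
  by rewrite sintegralrM muleA -EFinM mulfV ?gt_eqF // mul1e.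
rewrite lee_pmul2l ?lte_fin //; apply: ereal_sup_ubound; exists h' => // x.
have := hf x; rewrite /patch /=; case: ifP => _ hx.
  have -> : f x = c^-1%:E * (c%:E * f x).
    by rewrite muleA -EFinM mulVf ?lt0r_neq0 // mul1e.
  by rewrite EFinM lee_pmul2l ?lte_fin ?invr_gt0.
by rewrite lee_fin mulr_ge0_le0 // -lee_fin.
Qed.

End NonnegIntegral.

Lemma ge0_integral_itv_le_cst {R : realType} {a b c : R} {f : R -> \bar R} :
  (a <= b)%R -> (forall t, (a <= t <= b)%R -> 0 <= f t <= c%:E) ->
  \int[lebesgue_measure]_(t in `[a, b]) f t <= (c * (b - a))%:E.
Proof.
move=> ab fc.
have f0 t : `[a, b]%classic t -> 0 <= f t by rewrite /= in_itv /= => /fc /andP[].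
apply: le_trans (ge0_le_integral_nonmeas lebesgue_measure (g := cst c%:E) f0 _) _.
  by move=> t /=; rewrite in_itv /= => /fc /andP[].
by rewrite integral_cst /= ?lebesgue_measure_itv_cc.
Qed.

Lemma finite_measure_of_moment {R : realType} {p : nat} {K : fieldType}
    {absp : K -> R} (HQp : is_Qp p absp) {N : nat}
    {mu : {measure set (QpN absp N) -> \bar R}} {s : R} : (0 <= s)%R ->
  mu [set xi | (normp absp xi <= 1)%R] < +oo ->
  \int[mu]_xi ((normp absp xi) `^ s)%:E < +oo -> mu setT < +oo.
Proof.
move=> s_ge0 mu_ball moment_fin.
pose B := [set xi : QpN absp N | (normp absp xi <= 1)%R].
have mB : measurable B := measurable_normp_le HQp N ltr01.
have mu_outside : mu (~` B) <= \int[mu]_xi ((normp absp xi) `^ s)%:E.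
  rewrite -(setIT (~` B)) -integral_indic //; last exact: measurableC.
  apply: ge0_le_integral_nonmeas => xi _; first by rewrite lee_fin.
  rewrite indicE lee_fin; case: (boolP (xi \in ~` B)) => [|_]; last exact: powR_ge0.
  rewrite inE /B /= => /negP; rewrite -ltNge => xi_gt1.
  by rewrite -(powRr0 (normp absp xi)) ler_powR // ltW.
rewrite -(setUCr B); apply: le_lt_trans (measureU2 _ _ _) _ => //.
  exact: measurableC.
by rewrite lte_add_pinfty // (le_lt_trans mu_outside).
Qed.

Definition FGamma_osc {R : realType} {K : fieldType} (absp : K -> R) {N : nat}
    (a : mpoly.mpoly N K) (beta h t : R) (xi : 'rV[K]_N) : \bar R :=
  ereal_sup [set ((`|FGamma absp a beta r xi - FGamma absp a beta t xi|) ^+ 2)%:E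
            | r in [set r : R | (0 <= r)%R /\ (`|r - t| < h)%R]].

Section HeatKernelSymbol.
Local Open Scope ring_scope.
Context {R : realType} {K : fieldType} {absp : K -> R} {N : nat}.
Context {a : mpoly.mpoly N K} {beta : R}.
Local Notation F := (FGamma absp a beta).
Local Notation A xi := (absp (poly_eval a xi) `^ beta).
Local Notation osc := (FGamma_osc absp a beta).

Lemma FGamma_ge0 t xi : 0 <= F t xi.
Proof. exact: expR_ge0. Qed.

Lemma FGamma_le1 t xi : 0 <= t -> F t xi <= 1.
Proof. by move=> t_ge0; rewrite expR_le1 oppr_le0 mulr_ge0 ?powR_ge0. Qed.

Lemma FGamma_dist_le {r t} xi : 0 <= r -> 0 <= t ->
  `|F r xi - F t xi| <= `|r - t| * A xi.
Proof.
move=> r_ge0 t_ge0.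
apply: le_trans (ler_expRN_dist _ _ (mulr_ge0 r_ge0 (powR_ge0 _ _))
  (mulr_ge0 t_ge0 (powR_ge0 _ _))) _.
by rewrite -mulrBl normrM (ger0_norm (powR_ge0 _ _)).
Qed.

Lemma FGamma_sqr_dist_le {r t} xi : 0 <= r -> 0 <= t ->
  `|F r xi - F t xi| ^+ 2 <= `|r - t| * A xi.
Proof.
move=> r_ge0 t_ge0; apply: le_trans _ (FGamma_dist_le xi r_ge0 t_ge0).
have := FGamma_le1 r xi r_ge0; have := FGamma_le1 t xi t_ge0.
have := FGamma_ge0 r xi; have := FGamma_ge0 t xi.
set u := F r xi; set v := F t xi => v0 u0 v1 u1.
have dist_le1 : `|u - v| <= 1 by rewrite ler_norml; apply/andP; split; lra.
by rewrite expr2 ler_piMr.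
Qed.

Lemma FGamma_osc_ge0 h t xi : 0 < h -> 0 <= t -> (0 <= osc h t xi)%E.
Proof.
move=> h_gt0 t_ge0; apply: le_trans (ereal_sup_ubound _); last first.
  by exists t => //; split => //; rewrite subrr normr0.
by rewrite subrr normr0 expr0n.
Qed.

Lemma FGamma_osc_le h t xi : 0 <= t -> (osc h t xi <= (h * A xi)%:E)%E.
Proof.
move=> t_ge0; apply: ge_ereal_sup => _ [r [r_ge0 rt_lt] <-].
rewrite lee_fin; apply: le_trans (FGamma_sqr_dist_le _ r_ge0 t_ge0) _.
by rewrite ler_wpM2r ?powR_ge0 ?ltW.
Qed.

Variable mu : {measure set (QpN absp N) -> \bar R}.

Lemma integral_FGamma_osc_le {w : 'rV[K]_N -> R} {h t : R} :
  0 < h -> 0 <= t -> (forall xi, A xi <= w xi) ->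
  (\int[mu]_xi osc h t xi <= h%:E * \int[mu]_xi (w xi)%:E)%E.
Proof.
move=> h_gt0 t_ge0 Aw.
have w_ge0 xi : 0 <= w xi by apply: le_trans (Aw xi); exact: powR_ge0.
apply: le_trans (ge0_integralZl_le_nonmeas mu h h_gt0 _); last first.
  by move=> xi _; rewrite lee_fin.
apply: ge0_le_integral_nonmeas => xi _; first exact: FGamma_osc_ge0.
apply: le_trans (FGamma_osc_le h t xi t_ge0) _.
by rewrite -EFinM lee_fin ler_wpM2l ?(ltW h_gt0).
Qed.

Lemma integral_sqr_FGamma_le t : 0 <= t ->
  (\int[mu]_xi ((`|F t xi|) ^+ 2)%:E <= mu setT)%E.
Proof.
move=> t_ge0.
apply: le_trans (ge0_le_integral_nonmeas mu (g := cst 1%E) _ _) _.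
- by move=> xi _; rewrite lee_fin.
- move=> xi _; rewrite lee_fin ger0_norm ?FGamma_ge0 //.
  by rewrite exprn_ile1 ?FGamma_ge0 ?FGamma_le1.
by rewrite integral_cst // mul1e.
Qed.

End HeatKernelSymbol.

Theorem lemma6 (R : realType) (p : nat) (K : fieldType) (absp : K -> R)
    (HQp : is_Qp p absp) (N d : nat) (HN : (0 < N)%N)
    (a : mpoly.mpoly N K) (Ha : elliptic d a)
    (beta : R) (Hbeta : (0 < beta)%R)
    (mu : {measure set (QpN absp N) -> \bar R})
    (Hmu_locfin : forall r : R, mu [set xi | (normp absp xi <= r)%R] < +oo)
    (T : R) (HT : (0 < T)%R) :
  \int[mu]_xi ((normp absp xi) `^ (d%:R * beta))%:E < +oo ->
  ((fun h : R =>
      \int[lebesgue_measure]_(t in `[0%R, T])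
        \int[mu]_xi
          ereal_sup [set ((`|FGamma absp a beta r xi - FGamma absp a beta t xi|) ^+ 2)%:E
                    | r in [set r : R | (0 <= r)%R /\ (`|r - t| < h)%R]])
     @ 0%R^'+ --> 0)
  /\
  \int[lebesgue_measure]_(t in `[0%R, T])
     \int[mu]_xi ((`|FGamma absp a beta t xi|) ^+ 2)%:E < +oo.
Proof.
move=> moment_fin.
have [D D_gt0 aD] := homog_absp_powR_le HQp beta Ha.1 (ltW Hbeta).
set I := \int[mu]_xi _ in moment_fin.
have I_fin : I \is a fin_num.
  by rewrite ge0_fin_numE // integral_ge0 // => xi _; rewrite lee_fin powR_ge0.
have mu_fin : mu setT \is a fin_num.
  rewrite ge0_fin_numE // (finite_measure_of_moment HQp _ (Hmu_locfin 1%R) moment_fin) //.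
  by rewrite mulr_ge0 ?ler0n ?ltW.
split.
  apply: (@squeeze_cvge _ _ _ R (cst 0) _ (fun h => (h * (D * fine I * T))%:E));
    [|exact: cvg_cst|exact: cvge_at_right0_mulr].
  near=> h; have h_gt0 : (0 < h)%R by near: h; exact: nbhs_right_gt.
  rewrite integral_ge0 /=; last first.
    move=> t; rewrite /= in_itv /= => /andP[t_ge0 _].
    by apply: integral_ge0 => xi _; exact: FGamma_osc_ge0.
  rewrite -[T in X in _ <= X](subr0 T) !mulrA.
  apply: ge0_integral_itv_le_cst (ltW HT) _ => t /andP[t_ge0 _].
  rewrite integral_ge0 /=; last by move=> xi _; exact: FGamma_osc_ge0.
  have /le_trans := integral_FGamma_osc_le mu h_gt0 t_ge0 aD; apply.
  rewrite -mulrA EFinM lee_pmul2l ?lte_fin // EFinM fineK //.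
  under eq_integral do rewrite EFinM.
  by apply: ge0_integralZl_le_nonmeas => // xi _; rewrite lee_fin powR_ge0.
apply: le_lt_trans (ge0_integral_itv_le_cst (c := fine (mu setT)) (ltW HT) _) (ltry _).
move=> t /andP[t_ge0 _]; rewrite fineK // integral_sqr_FGamma_le // andbT.
by apply: integral_ge0 => xi _; rewrite lee_fin.
Unshelve. all: end_near.
Qed.
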